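(* Let $k$ be an odd integer with $k\ge 5$, let $D$ be a strong $k$-quasi-transitive digraph with $\mathrm{diam}(D)\ge k+2$, let $u,v\in V(D)$ with $d(u,v)=k+2$, and let $P=x_0x_1\ldots x_{k+2}$ be a shortest $(u,v)$-path with $x_0=u$, $x_{k+2}=v$. Let $I=\{x\in V(D)\setminus V(P): x\Rightarrow V(P)\}$, $W=\{x\in V(D)\setminus V(P): V(P)\Rightarrow x\}$ and $B=V(D)\setminus(V(P)\cup I\cup W)$. If $D[V(P)]$ is a semicomplete digraph, then for any $x\in B$, either $x$ is adjacent to every vertex of $V(P)$, or there exist $x_t,x_s\in V(P)$ with $4\le t+1<s\le k-1$ such that $\{x_s,x_{s+1},\ldots,x_{k+2}\}\mapsto x\mapsto\{x_0,x_1,\ldots,x_t\}$.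
   Context: All digraphs are finite, without loops or multiple arcs (opposite arcs allowed). $x\rightarrow y$ means $xy\in A(D)$; $x,y$ are adjacent if $x\rightarrow y$ or $y\rightarrow x$. For disjoint vertex sets $X,Y$ (singletons identified with vertices): $X\rightarrow Y$ means every vertex of $X$ dominates every vertex of $Y$; $X\Rightarrow Y$ means there is no arc from $Y$ to $X$; $X\mapsto Y$ means both $X\rightarrow Y$ and $X\Rightarrow Y$. For $k\ge 2$, $D$ is $k$-quasi-transitive if for every path $x_0x_1\ldots x_k$ of length $k$, $x_0$ and $x_k$ are adjacent. $d(x,y)$ is the length of a shortest $(x,y)$-path, $\mathrm{diam}(D)=\max_{x,y}d(x,y)$. $D[S]$ is the induced subdigraph; a semicomplete digraph is one in which every two distinct vertices are adjacent. *)

From mathcomp Require Import all_boot.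
Set Implicit Arguments. Unset Strict Implicit. Unset Printing Implicit Defensive.

(* A digraph is a finite vertex type T with an arc relation A : rel T
   (x -> y iff A x y); no loops means A irreflexive. Opposite arcs allowed. *)

Section Digraphs.
Variables (T : finType) (A : rel T).

Definition adj (x y : T) : bool := A x y || A y x.

(* x :: q is a (directed) path: distinct vertices, consecutive arcs.
   Its length is size q; it goes from x to last x q. *)
Definition dpath (x : T) (q : seq T) : Prop := uniq (x :: q) /\ path A x q.

Definition k_quasi_transitive (k : nat) : Prop :=
  forall (x : T) (q : seq T), dpath x q -> size q = k -> adj x (last x q).

Definition strong : Prop :=
  forall x y : T, exists q, dpath x q /\ last x q = y.

Definition dist_eq (x y : T) (n : nat) : Prop :=
  (exists q, [/\ dpath x q, last x q = y & size q = n]) /\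
  (forall q, dpath x q -> last x q = y -> n <= size q).

Definition diam_ge (m : nat) : Prop :=
  exists x y n, dist_eq x y n /\ m <= n.

(* X => y : no arc from y to X ;  y => X : no arc from X to y *)
Definition set_mapsto (X : {set T}) (y : T) : Prop :=
  forall z, z \in X -> A z y /\ ~~ A y z.
Definition mapsto_set (y : T) (X : {set T}) : Prop :=
  forall z, z \in X -> A y z /\ ~~ A z y.

Definition semicomplete_on (S : {set T}) : Prop :=
  forall y z, y \in S -> z \in S -> y != z -> adj y z.

End Digraphs.

From mathcomp Require Import all_boot zify.
Set Implicit Arguments. Unset Strict Implicit. Unset Printing Implicit Defensive.

(* Since P is a shortest path, there is no arc x_i -> x_j with j >= i + 2, so
   semicompleteness of D[V(P)] gives x_j -> x_i for all such pairs.  Inside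
   V(P) one then finds, for c < b, a path of length k - 1 from x_b down to x_c
   (increasing runs joined by backward jumps), and the path x_j ... x_(j+k-1).
   Prefixing an arc x -> x_b (or appending x_a -> x) and applying
   k-quasi-transitivity, x is adjacent to every x_c with c < b when x -> x_b,
   and to every x_c with c > a when x_a -> x.  Hence if x_c is not adjacent to
   x, all out-neighbours of x on P come before x_c and all in-neighbours after
   it; so x |-> x_i before the first non-neighbour and x_i |-> x after the last
   one.  The forward paths x_j ... x_(j+k-1) with j <= 3 show that no
   non-neighbour lies among x_0, ..., x_3; the bound at the other end is the
   same statement for the converse digraph and the reversed path. *)

Definition back_complete_path (T : eqType) (A : rel T) (P : nat -> T) (n : nat) : Prop :=
  [/\ forall i, i < n -> A (P i) (P i.+1),
      forall i j, i.+2 <= j -> j <= n -> A (P j) (P i) &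
      forall i j, i <= n -> j <= n -> P i = P j -> i = j].

Lemma uniq_iota_cat a n s :
  uniq (iota a n ++ s) = all (fun i => (i < a) || (a + n <= i)) s && uniq s.
Proof.
rewrite cat_uniq iota_uniq /= -all_predC; congr (_ && _).
by apply: eq_all => i; rewrite /= mem_iota negb_and -ltnNge -leqNgt.
Qed.

Lemma last_iota a n : last a (iota a.+1 n) = a + n.
Proof. by elim: n a => [|n IHn] a /=; rewrite ?addn0 ?IHn ?addSnnS. Qed.

Lemma path_map_iota (T : eqType) (A : rel T) (P : nat -> T) m n :
  path A (P m) (map P (iota m.+1 n)) = all (fun i => A (P i) (P i.+1)) (iota m n).
Proof. by elim: n m => [|n IHn] m //=; rewrite IHn. Qed.

Section ShortestPath.
Variables (T : finType) (A : rel T) (P : nat -> T) (n : nat).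
Hypotheses (dist_n : dist_eq A (P 0) (P n) n) (P_dpath : dpath A (P 0) (map P (iota 1 n))).

Let P_inj : {in gtn n.+1 &, injective P} := elimT (mkseq_uniqP P n.+1) P_dpath.1.

Let P_step i : i < n -> A (P i) (P i.+1).
Proof.
by move: P_dpath.2; rewrite path_map_iota => /allP steps i_n; apply: steps; rewrite mem_iota.
Qed.

Lemma shortest_path_no_forward_arc i j : i.+2 <= j -> j <= n -> ~~ A (P i) (P j).
Proof.
move=> ij j_n; apply/negP => Aij; have [_ shortest] := dist_n.
have path_run m r : m + r <= n -> path A (P m) (map P (iota m.+1 r)).
  move=> mr; rewrite path_map_iota; apply/allP => l; rewrite mem_iota => ?.
  by apply: P_step; lia.
suff /shortest : dpath A (P 0) (map P (iota 1 i ++ iota j (n - j).+1)).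
  rewrite size_map size_cat !size_iota last_map last_cat /= last_iota subnKC //.
  by move=> /(_ erefl); lia.
split.
- rewrite -map_cons -cat_cons -[0 :: _]/(iota 0 i.+1) map_inj_in_uniq.
    by rewrite uniq_iota_cat iota_uniq andbT; apply/allP => l; rewrite mem_iota; lia.
  by move=> l m; rewrite !mem_cat !mem_iota => l_n m_n; apply: P_inj; rewrite inE /=; lia.
- rewrite map_cat cat_path last_map last_iota add0n path_run /=; last lia.
  by rewrite Aij path_run //; lia.
Qed.

Lemma shortest_semicomplete_path_back_complete :
  (forall i j, i <= n -> j <= n -> P i != P j -> adj A (P i) (P j)) ->
  back_complete_path A P n.
Proof.
move=> sc; split=> [|i j ij j_n|]; [exact: P_step | | exact: P_inj].
have i_n : i <= n by lia.
have : P j != P i by apply: contraTneq ij => /P_inj-> //; rewrite ltnNge leqnSn.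
by move/(sc _ _ j_n i_n); rewrite /adj (negbTE (shortest_path_no_forward_arc ij j_n)) orbF.
Qed.

End ShortestPath.

Definition index_arc : rel nat := fun i j => (j == i.+1) || (j.+2 <= i).

Lemma path_iota_cat a n s :
  path index_arc a (iota a.+1 n ++ s) = path index_arc (a + n) s.
Proof.
elim: n a => [|n IHn] a /=; first by rewrite addn0.
by rewrite IHn /index_arc eqxx addSnnS.
Qed.

Lemma path_iota a n : path index_arc a (iota a.+1 n).
Proof. by rewrite -[iota _ _]cats0 path_iota_cat. Qed.

(* Runs [b..h] ++ [f..c] when b - c <= 4, else [b..k+2] ++ [c+2..b-3] ++ [0..c]:
   each skips exactly three of the indices 0, ..., k + 2. *)
Lemma index_path_down k b c : 2 < k -> c < b -> b <= k + 2 ->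
  exists s, [/\ path index_arc b s, uniq (b :: s), all (leq^~ (k + 2)) (b :: s),
                size s = k.-1 & last b s = c].
Proof.
move=> k_gt2 cb bk.
have [small_gap | large_gap] := leqP (b - c) 4.
  pose f := minn c (4 - (b - c)); pose h := f + k - 2 + (b - c).
  exists (iota b.+1 (h - b) ++ iota f (c - f).+1); split.
  - rewrite path_iota_cat /= path_iota andbT /index_arc; lia.
  - rewrite -cat_cons -[b :: _]/(iota b (h - b).+1) uniq_iota_cat iota_uniq andbT.
    by apply/allP => i; rewrite mem_iota; lia.
  - by apply/allP => i; rewrite inE mem_cat !mem_iota; lia.
  - rewrite size_cat !size_iota; lia.
  - rewrite last_cat /= last_iota; lia.
exists (iota b.+1 (k + 2 - b) ++ iota (c + 2) (b - c - 5).+1 ++ iota 0 c.+1); split.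
- rewrite path_iota_cat /= path_iota_cat /= path_iota andbT /index_arc; lia.
- rewrite -cat_cons -[b :: _]/(iota b (k + 2 - b).+1) !uniq_iota_cat iota_uniq andbT.
  by apply/andP; split; apply/allP => i; rewrite ?mem_cat !mem_iota; lia.
- by apply/allP => i; rewrite inE !mem_cat !mem_iota; lia.
- rewrite !size_cat !size_iota; lia.
- rewrite !last_cat /= last_iota; lia.
Qed.

Section BackCompletePath.
Variables (T : eqType) (A : rel T) (P : nat -> T) (n : nat).
Hypothesis HP : back_complete_path A P n.

Lemma path_map_index_arc i s :
  all (leq^~ n) (i :: s) -> path index_arc i s -> path A (P i) (map P s).
Proof.
have [step back _] := HP.
elim: s i => [|j s IHs] i //= /and3P[i_n j_n s_n] /andP[ij js].
have -> : path A (P j) (map P s) by apply: IHs; rewrite //= j_n.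
case/orP: ij => [/eqP ji | ij]; last by rewrite andbT; apply: back.
by rewrite ji andbT; apply: step; rewrite -ji.
Qed.

Lemma uniq_map_index s : all (leq^~ n) s -> uniq s -> uniq (map P s).
Proof.
have [_ _ inj] := HP.
by move=> /allP s_n; rewrite map_inj_in_uniq // => i j /s_n i_n /s_n j_n; apply: inj.
Qed.

End BackCompletePath.

Section Converse.
Variables (T : finType) (A : rel T).

Lemma k_quasi_transitive_converse k :
  k_quasi_transitive A k -> k_quasi_transitive (fun y z => A z y) k.
Proof.
move=> qtA x q [uq pq] sq.
have rev_xq : last x q :: rev (belast x q) = rev (x :: q).
  by rewrite [x :: q]lastI rev_rcons.
have last_rev : last (last x q) (rev (belast x q)) = x.
  by rewrite -(last_cons x) rev_xq rev_cons last_rcons.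
have := qtA (last x q) (rev (belast x q)).
rewrite size_rev size_belast last_rev /adj orbC.
apply=> //; split; first by rewrite rev_xq rev_uniq.
by rewrite rev_path.
Qed.

Lemma back_complete_path_converse P n :
  back_complete_path A P n -> back_complete_path (fun y z => A z y) (fun i => P (n - i)) n.
Proof.
case=> step back inj; split=> [i lt_in | i j ij j_n | i j i_n j_n eq_P].
- by rewrite -(subnSK lt_in); apply: step; lia.
- by apply: back; lia.
- by have := inj _ _ (leq_subr i n) (leq_subr j n) eq_P; lia.
Qed.

End Converse.

Section OutNeighbour.
Variables (T : finType) (A : rel T) (k : nat) (P : nat -> T) (x : T).
Hypotheses (qtA : k_quasi_transitive A k) (k_gt2 : 2 < k).
Hypotheses (HP : back_complete_path A P (k + 2)) (x_notin : forall i, i <= k + 2 -> x != P i).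

Lemma adj_index_path_end b s :
  path index_arc b s -> uniq (b :: s) -> all (leq^~ (k + 2)) (b :: s) -> size s = k.-1 ->
  A x (P b) -> adj A x (P (last b s)).
Proof.
move=> pth uq bnd sz xb.
have x_notin_path : x \notin map P (b :: s).
  by apply/mapP=> -[i /(allP bnd) i_n x_Pi]; move/eqP: x_Pi; apply/negP/x_notin.
have := qtA (q := map P (b :: s)); rewrite /= last_map; apply.
  split; first by rewrite (cons_uniq x) -map_cons x_notin_path (uniq_map_index HP).
  by rewrite /= xb (path_map_index_arc HP).
by rewrite size_map /= sz; lia.
Qed.

Lemma adj_below_out_neighbor b c : A x (P b) -> c <= b -> b <= k + 2 -> adj A x (P c).
Proof.
move=> xb; rewrite leq_eqVlt => /orP[/eqP-> _ | cb b_n]; first by rewrite /adj xb.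
have [s [pth uq bnd sz <-]] := index_path_down k_gt2 cb b_n.
exact: adj_index_path_end.
Qed.

Lemma adj_forward_out_neighbor i :
  A x (P i) -> i + k.-1 <= k + 2 -> adj A x (P (i + k.-1)).
Proof.
move=> xi bnd; rewrite -(last_iota i); apply: adj_index_path_end xi.
- exact: path_iota.
- exact: (iota_uniq i k.-1.+1).
- by apply/allP=> j; rewrite -[i :: _]/(iota i k.-1.+1) mem_iota; lia.
- exact: size_iota.
Qed.

End OutNeighbour.

Section InNeighbour.
Variables (T : finType) (A : rel T) (k : nat) (P : nat -> T) (x : T).
Hypotheses (qtA : k_quasi_transitive A k) (k_gt2 : 2 < k).
Hypotheses (HP : back_complete_path A P (k + 2)) (x_notin : forall i, i <= k + 2 -> x != P i).

Let qtA' := k_quasi_transitive_converse qtA.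
Let HP' := back_complete_path_converse HP.
Let x_notin' i (_ : i <= k + 2) : x != P (k + 2 - i) := x_notin (leq_subr i _).

Lemma adj_above_in_neighbor a c : A (P a) x -> a <= c -> c <= k + 2 -> adj A x (P c).
Proof.
move=> ax ac c_n.
have := adj_below_out_neighbor qtA' k_gt2 HP' x_notin' (b := k + 2 - a) (c := k + 2 - c).
rewrite /= !subKn ?(leq_trans ac) // /adj orbC; apply=> //; lia.
Qed.

Lemma adj_backward_in_neighbor i :
  A (P (i + k.-1)) x -> i + k.-1 <= k + 2 -> adj A x (P i).
Proof.
move=> ix bnd.
have := adj_forward_out_neighbor qtA' k_gt2 HP' x_notin' (i := k + 2 - (i + k.-1)).
have -> : k + 2 - (k + 2 - (i + k.-1) + k.-1) = i by lia.
rewrite /= subKn // /adj orbC; apply=> //; lia.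
Qed.

Lemma out_neighbor_before_nonadj c i :
  ~~ adj A x (P c) -> i <= k + 2 -> A x (P i) -> i < c.
Proof.
move=> nc i_n xi; rewrite ltnNge; apply: contra nc => ci.
exact: adj_below_out_neighbor xi ci i_n.
Qed.

Lemma in_neighbor_after_nonadj c i :
  c <= k + 2 -> ~~ adj A x (P c) -> A (P i) x -> c < i.
Proof.
move=> c_n nc ix; rewrite ltnNge; apply: contra nc => ic.
exact: adj_above_in_neighbor ix ic c_n.
Qed.

Lemma arcs_before_nonadj c i : ~~ adj A x (P c) -> c <= k + 2 -> i < c ->
  adj A x (P i) -> A x (P i) /\ ~~ A (P i) x.
Proof.
move=> nc c_n ic; have nix : ~~ A (P i) x.
  by apply/negP => /(in_neighbor_after_nonadj c_n nc); rewrite ltnNge (ltnW ic).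
by rewrite /adj (negbTE nix) orbF.
Qed.

Lemma arcs_after_nonadj c i : ~~ adj A x (P c) -> c < i -> i <= k + 2 ->
  adj A x (P i) -> A (P i) x /\ ~~ A x (P i).
Proof.
move=> nc ci i_n; have nxi : ~~ A x (P i).
  by apply/negP => /(out_neighbor_before_nonadj nc i_n); rewrite ltnNge (ltnW ci).
by rewrite /adj (negbTE nxi).
Qed.

Hypotheses (out_nb : exists2 b, b <= k + 2 & A x (P b)).
Hypotheses (in_nb : exists2 a, a <= k + 2 & A (P a) x).

Lemma nonadj_ge4 c : c <= k + 2 -> ~~ adj A x (P c) -> 4 <= c.
Proof.
move=> c_n nc; have [b b_n xb] := out_nb; have [a a_n ax] := in_nb.
have in_after i : c < i -> i <= k + 2 -> adj A x (P i) -> A (P i) x.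
  by move=> ci i_n /(arcs_after_nonadj nc ci i_n) [].
have c_lt_n : c < k + 2 := leq_trans (in_neighbor_after_nonadj c_n nc ax) a_n.
have in_last : A (P (k + 2)) x.
  by apply: in_after => //; apply: adj_above_in_neighbor ax a_n _.
have adj3 : adj A x (P 3).
  by apply: adj_backward_in_neighbor; rewrite (_ : 3 + k.-1 = k + 2) //; lia.
rewrite ltnNge; apply/negP => c_le3.
have c_lt3 : c < 3 by rewrite ltn_neqAle c_le3 andbT; apply: contraNneq nc => ->.
have in3 : A (P 3) x by apply: in_after => //; lia.
have adj_low j : 0 < j < 3 -> adj A x (P j).
  move=> j_range; apply: adj_backward_in_neighbor; last lia.
  apply: in_after; [lia | lia | apply: adj_above_in_neighbor in3 _ _; lia].
suff : adj A x (P c) by rewrite (negbTE nc).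
have [-> | c_pos] := posnP c; first exact: adj_below_out_neighbor xb (leq0n b) b_n.
apply: adj_low; lia.
Qed.

End InNeighbour.

Section Window.
Variables (T : finType) (A : rel T) (k : nat) (P : nat -> T) (x : T).
Hypotheses (qtA : k_quasi_transitive A k) (k_gt2 : 2 < k).
Hypotheses (HP : back_complete_path A P (k + 2)) (x_notin : forall i, i <= k + 2 -> x != P i).
Hypotheses (out_nb : exists2 b, b <= k + 2 & A x (P b)).
Hypotheses (in_nb : exists2 a, a <= k + 2 & A (P a) x).

Lemma nonadj_le_km2 c : c <= k + 2 -> ~~ adj A x (P c) -> c <= k - 2.
Proof.
move=> c_n nc; have [b b_n xb] := out_nb; have [a a_n ax] := in_nb.
suff : 4 <= k + 2 - c by lia.
apply: (nonadj_ge4 (k_quasi_transitive_converse qtA) k_gt2 (back_complete_path_converse HP)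
         (fun i _ => x_notin (leq_subr i _))) => /=.
- by exists (k + 2 - a); rewrite ?subKn ?leq_subr.
- by exists (k + 2 - b); rewrite ?subKn ?leq_subr.
- exact: leq_subr.
- by rewrite subKn // /adj orbC.
Qed.

Lemma nonadj_window c : c <= k + 2 -> ~~ adj A x (P c) ->
  exists t s, [/\ 4 <= t + 1, t + 1 < s, s <= k - 1,
    forall i, s <= i <= k + 2 -> A (P i) x /\ ~~ A x (P i) &
    forall i, i <= t -> A x (P i) /\ ~~ A (P i) x].
Proof.
move=> c_n nc; pose nonadj i := (i <= k + 2) && ~~ adj A x (P i).
have nonadj_ub i : nonadj i -> i <= k + 2 by case/andP.
have ex_nonadj : exists i, nonadj i by exists c; rewrite /nonadj c_n.
have [t /andP[t_n nt] t_min] := ex_minnP ex_nonadj.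
have [s /andP[s_n ns] s_max] := ex_maxnP ex_nonadj nonadj_ub.
have t_ge4 := nonadj_ge4 qtA k_gt2 HP x_notin out_nb in_nb t_n nt.
have s_le := nonadj_le_km2 s_n ns.
have t_le_s : t <= s by apply: s_max; rewrite /nonadj t_n.
exists t.-1, s.+1; split; try lia.
- move=> i /andP[s_i i_n]; apply: (arcs_after_nonadj qtA k_gt2 HP x_notin ns s_i i_n).
  by apply: contraT => ni; have := s_max i; rewrite /nonadj /= ni i_n => /(_ isT); lia.
- move=> i i_t; have i_lt_t : i < t by lia.
  apply: (arcs_before_nonadj qtA k_gt2 HP x_notin nt t_n i_lt_t).
  by apply: contraT => ni; have := t_min i; rewrite /nonadj /= ni andbT => /(_ _); lia.
Qed.

End Window.

Theorem lemma2p11 (T : finType) (A : rel T) (k : nat) (u v : T) (P : nat -> T) :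
  irreflexive A ->
  odd k -> 5 <= k ->
  strong A -> k_quasi_transitive A k ->
  diam_ge A (k + 2) ->
  dist_eq A u v (k + 2) ->
  (* P = x_0 x_1 ... x_{k+2} is a shortest (u,v)-path *)
  P 0 = u -> P (k + 2) = v ->
  dpath A (P 0) [seq P i | i <- iota 1 (k + 2)] ->
  let VP : {set T} := [set P (val i) | i : 'I_(k + 3)] in
  let I : {set T} := [set x | (x \notin VP) && [forall y in VP, ~~ A y x]] in
  let W : {set T} := [set x | (x \notin VP) && [forall y in VP, ~~ A x y]] in
  let B : {set T} := ~: (VP :|: I :|: W) in
  semicomplete_on A VP ->
  forall x, x \in B ->
    (forall y, y \in VP -> adj A x y) \/
    (exists t s : nat, [/\ 4 <= t + 1, t + 1 < s, s <= k - 1,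
       set_mapsto A [set P (val i) | i : 'I_(k + 3) & s <= val i] x &
       mapsto_set A x [set P (val i) | i : 'I_(k + 3) & val i <= t]]).
Proof.
move=> _ _ k_ge5 _ qtA _ dist_uv P0 Pk P_dpath VP I W B scVP x.
rewrite !inE => /norP[/norP[x_VP x_I] x_W]; rewrite -P0 -Pk in dist_uv.
have ord_le (i : 'I_(k + 3)) : val i <= k + 2 by rewrite -ltnS -addnS ltn_ord.
have P_VP i : i <= k + 2 -> P i \in VP.
  move=> i_n; have i_lt : i < k + 3 by lia.
  by apply/imsetP; exists (Ordinal i_lt).
have HP : back_complete_path A P (k + 2).
  by apply: shortest_semicomplete_path_back_complete => // i j /P_VP ? /P_VP ?; apply: scVP.
have x_notin i : i <= k + 2 -> x != P i by move=> /P_VP; apply: contraTneq => <-.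
have in_nb : exists2 a, a <= k + 2 & A (P a) x.
  move: x_I; rewrite x_VP => /forall_inPn[_ /imsetP[i _ ->]].
  by rewrite negbK; exists i; rewrite ?ord_le.
have out_nb : exists2 b, b <= k + 2 & A x (P b).
  move: x_W; rewrite x_VP => /forall_inPn[_ /imsetP[i _ ->]].
  by rewrite negbK; exists i; rewrite ?ord_le.
have [all_adj | /forallPn[c nc]] := boolP [forall i : 'I_(k + 3), adj A x (P i)].
  by left=> _ /imsetP[i _ ->]; apply: (forallP all_adj).
have [t [s [t_ge4 t_s s_le after before]]] :=
  nonadj_window qtA (ltnW (ltnW k_ge5)) HP x_notin out_nb in_nb (ord_le c) nc.
right; exists t, s; split=> // z /imsetP[i]; rewrite inE => i_ts ->.
- by apply: after; rewrite i_ts ord_le.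
- exact: before.
Qed.
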